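(* Let $n\ge 2$. Every equilibrium graph $G$ of $(1,1,\dots,1)$-BG (all $n$ budgets equal to $1$) in the MAX version has connected underlying graph $U(G)$, $U(G)$ has a unique cycle, this cycle has at most $7$ vertices, and every vertex is within distance $2$ in $U(G)$ of the cycle.
   Context: Bounded budget network creation game $(b_1,\dots,b_n)$-BG: $n$ players with integer budgets $0\le b_i\le n-1$. A strategy of player $i$ is a set $S_i\subseteq\{1,\dots,n\}\setminus\{i\}$ with $|S_i|=b_i$; a profile is realized by the directed graph $G$ on $u_1,\dots,u_n$ with an arc $\overrightarrow{u_iu_j}$ iff $j\in S_i$. $U(G)$ is the undirected multigraph obtained by ignoring directions; if both $\overrightarrow{uv}$ and $\overrightarrow{vu}$ are arcs (a brace), $uv$ is a double edge of $U(G)$, regarded as a cycle with 2 vertices. $\operatorname{dist}(u,v)$ is the distance in $U(G)$, defined as $n^2$ between different components. MAX cost: $c_{MAX}(u)=\max_v\operatorname{dist}(u,v)+(\kappa-1)n^2$, $\kappa$ the number of components of $U(G)$. An equilibrium graph in the MAX version is a realization in which no vertex can decrease its MAX cost by changing its own strategy while the others are fixed. *)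

From mathcomp Require Import all_boot.
Set Implicit Arguments.
Unset Strict Implicit.
Unset Printing Implicit Defensive.

(* Players/vertices u_1..u_n are 'I_n.  A strategy profile assigns to each
   player i a set S i of other players; the realization G has an arc
   u_i -> u_j iff j \in S i. *)
Definition profile (n : nat) := 'I_n -> {set 'I_n}.

Definition valid_profile (n : nat) (b : 'I_n -> nat) (S : profile n) : Prop :=
  forall i : 'I_n, i \notin S i /\ #|S i| = b i.

(* Adjacency in the underlying undirected multigraph U(G)
   (multiplicity is irrelevant for distances / connectivity). *)
Definition adj (n : nat) (S : profile n) : rel 'I_n :=
  fun u v => (v \in S u) || (u \in S v).

Fixpoint walk (n : nat) (S : profile n) (k : nat) (u v : 'I_n) : bool :=
  match k with
  | 0 => u == v
  | k'.+1 => [exists w, adj S u w && walk S k' w v]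
  end.

(* dist(u,v) in U(G): length of a shortest walk (such a walk, if any, has
   length < n); n^2 if u and v lie in different components. *)
Definition dist (n : nat) (S : profile n) (u v : 'I_n) : nat :=
  \big[minn/n ^ 2]_(k < n | walk S k u v) k.

Definition ncomp (n : nat) (S : profile n) : nat :=
  #|[set [set v | connect (adj S) u v] | u : 'I_n]|.

Definition cost_max (n : nat) (S : profile n) (u : 'I_n) : nat :=
  \max_(v : 'I_n) dist S u v + (ncomp S - 1) * n ^ 2.

Definition deviate (n : nat) (S : profile n) (i : 'I_n) (T : {set 'I_n}) : profile n :=
  fun j => if j == i then T else S j.

Definition equilibrium_max (n : nat) (b : 'I_n -> nat) (S : profile n) : Prop :=
  valid_profile b S /\
  forall (i : 'I_n) (T : {set 'I_n}), i \notin T -> #|T| = b i ->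
    cost_max S i <= cost_max (deviate S i T) i.

Definition connectedU (n : nat) (S : profile n) : Prop :=
  forall u v : 'I_n, connect (adj S) u v.

(* Cycles of the multigraph U(G), given as sets of arcs of G (each arc is an
   edge of U(G); a brace gives two parallel edges, i.e. a 2-cycle). *)
Definition cycle_vertices (n : nat) (E : {set 'I_n * 'I_n}) : {set 'I_n} :=
  [set v | [exists a in E, (a.1 == v) || (a.2 == v)]].

Definition edge_deg (n : nat) (E : {set 'I_n * 'I_n}) (v : 'I_n) : nat :=
  #|[set a in E | a.1 == v]| + #|[set a in E | a.2 == v]|.

Definition is_cycle (n : nat) (S : profile n) (E : {set 'I_n * 'I_n}) : Prop :=
  [/\ (forall a, a \in E -> a.2 \in S a.1),
      E != set0,
      (forall v, v \in cycle_vertices E -> edge_deg E v = 2) &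
      (forall u v, u \in cycle_vertices E -> v \in cycle_vertices E ->
         connect (fun x y => ((x, y) \in E) || ((y, x) \in E)) u v)].

From mathcomp Require Import all_boot zify.
Set Implicit Arguments.
Unset Strict Implicit.
Unset Printing Implicit Defensive.

(* With unit budgets every player owns exactly one arc, so G is a functional graph
   [u |-> f u]. A vertex [u] on a cycle of f that points its arc into another
   component keeps its own component connected, so the number of components drops
   and with it the MAX cost of [u] (by at least n^2); hence U(G) is connected and
   consists of one cycle with trees hanging from it.
   Costs are bounded below by potentials that change by at most one along each arc,
   and above by exhibiting walks in the deviated graph. If a deepest vertex [x] had
   depth D >= 3, its cost would be at least D + 1 and at least D + r(y) for every [y]
   outside the branch of the depth-1 ancestor [x1] of [x] (r is the route length
   from the root of [x]); pointing [x] to [x1] brings every vertex within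
   max(D, 2 + r(y)) steps. If the cycle had k >= 8 vertices, the cycle vertex [c]
   opposite to the root of a deepest vertex would have cost at least k/2 + depth,
   and pointing its arc k/2 - 1 steps further along the cycle reduces this by one. *)

Lemma bigmin_leq (I : eqType) (r : seq I) (P : pred I) (F : I -> nat) x i0 :
  i0 \in r -> P i0 -> \big[minn/x]_(i <- r | P i) F i <= F i0.
Proof.
elim: r => // a r IH; rewrite inE big_cons => /orP[/eqP <- Pa | ir Pi0].
  by rewrite Pa geq_minl.
case: (P a); last exact: IH.
exact: leq_trans (geq_minr _ _) (IH ir Pi0).
Qed.

Section Walks.
Variable n : nat.
Implicit Types (S : profile n) (u v w : 'I_n).

Lemma adj_sym S : symmetric (adj S).
Proof. by move=> u v; rewrite /adj orbC. Qed.

Lemma adj_connect_sym S : connect_sym (adj S).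
Proof. exact/sym_connect_sym/adj_sym. Qed.

Lemma walk_cat S a b u w v : walk S a u w -> walk S b w v -> walk S (a + b) u v.
Proof.
elim: a u => [|a IH] u /=; first by move/eqP->.
case/existsP=> z /andP[uz zw] wv; apply/existsP; exists z; rewrite uz /=; exact: IH.
Qed.

Lemma walk1 S u v : adj S u v -> walk S 1 u v.
Proof. by move=> h; apply/existsP; exists v; rewrite h /= eqxx. Qed.

Lemma walk_sym S k u v : walk S k u v -> walk S k v u.
Proof.
elim: k u => [|k IH] u; first by rewrite /= eq_sym.
case/existsP=> z /andP[uz /IH zv].
have zu : walk S 1 z u by apply: walk1; rewrite adj_sym.
by rewrite -addn1; apply: walk_cat zv zu.
Qed.

Lemma walk_path S k u v :
  walk S k u v -> exists p, [/\ size p = k, path (adj S) u p & last u p = v].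
Proof.
elim: k u => [|k IH] u /=; first by move/eqP->; exists [::].
case/existsP=> z /andP[uz /IH [p [sp pp lp]]].
by exists (z :: p); rewrite /= uz sp pp lp.
Qed.

Lemma path_walk S p u : path (adj S) u p -> walk S (size p) u (last u p).
Proof.
elim: p u => [|z p IH] u /=; first by rewrite eqxx.
case/andP=> uz pz; apply/existsP; exists z; rewrite uz; exact: IH.
Qed.

Lemma connect_walk S u v : connect (adj S) u v -> exists k, walk S k u v.
Proof. by case/connectP=> p pp ->; exists (size p); apply: path_walk. Qed.

Lemma walk_connect S k u v : walk S k u v -> connect (adj S) u v.
Proof. by case/walk_path=> p [_ pp <-]; apply/connectP; exists p. Qed.

Lemma walk_shorten S k u v : walk S k u v -> exists2 j, j < n & walk S j u v.
Proof.
case/walk_path=> p [_ pp <-]; case: (shortenP pp) => p' pp' up' _.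
exists (size p'); last exact: path_walk.
have /= <- := card_uniqP up'.
by apply: leq_trans (max_card _) _; rewrite card_ord.
Qed.

Lemma dist_le_walk S k u v : walk S k u v -> dist S u v <= k.
Proof.
have short j : j < n -> walk S j u v -> dist S u v <= j.
  move=> jn wj; have := @bigmin_leq _ (index_enum 'I_n) (fun i : 'I_n => walk S i u v)
    (fun i : 'I_n => nat_of_ord i) (n ^ 2) (Ordinal jn).
  by rewrite mem_index_enum => /(_ isT wj).
move=> wk; case: (ltnP k n) => [kn|nk]; first exact: short.
have [j jn wj] := walk_shorten wk.
by apply: leq_trans (short j jn wj) _; apply: leq_trans nk; apply: ltnW.
Qed.

Lemma dist_cases S u v : dist S u v = n ^ 2 \/ walk S (dist S u v) u v.
Proof.
rewrite /dist; apply: (big_ind (fun m => m = n ^ 2 \/ walk S m u v)) => //.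
- by left.
- by move=> a b Ha Hb; rewrite /minn; case: ifP.
- by move=> i wi; right.
Qed.

Lemma walk_dist S k u v : 1 < n -> walk S k u v -> walk S (dist S u v) u v.
Proof.
move=> n1 wk; case: (dist_cases S u v) => // dn.
have [j jn wj] := walk_shorten wk; have := dist_le_walk wj.
by rewrite dn -mulnn; nia.
Qed.

Lemma dist_disconnected S u v : ~~ connect (adj S) u v -> dist S u v = n ^ 2.
Proof.
move=> nc; rewrite /dist big_pred0 // => i; apply/negP => wi.
by move/negP: nc; apply; apply: walk_connect wi.
Qed.

Lemma dist_le_sqr S u v : dist S u v <= n ^ 2.
Proof.
rewrite /dist; apply: (big_ind (fun m => m <= n ^ 2)) => //.
- by move=> a b ha hb; rewrite geq_min ha.
- by move=> i _; have := ltn_ord i; rewrite -mulnn; nia.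
Qed.

Lemma eq_walk S S' : adj S =2 adj S' -> forall k u v, walk S k u v = walk S' k u v.
Proof. by move=> e; elim=> [|k IH] u v //=; apply: eq_existsb => z; rewrite e IH. Qed.

Lemma eq_dist S S' : adj S =2 adj S' -> forall u v, dist S u v = dist S' u v.
Proof. by move=> e u v; apply: eq_bigl => i; rewrite (eq_walk e). Qed.

Lemma eq_ncomp S S' : adj S =2 adj S' -> ncomp S = ncomp S'.
Proof.
move=> e; congr #|pred_of_set _|; apply: eq_imset => u.
by apply/setP=> v; rewrite !inE (eq_connect e).
Qed.

Lemma eq_cost_max S S' : adj S =2 adj S' -> forall u, cost_max S u = cost_max S' u.
Proof.
move=> e u; rewrite /cost_max (eq_ncomp e); congr (_ + _).
by apply: eq_bigr => v _; rewrite (eq_dist e).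
Qed.

End Walks.

Section Costs.
Variable n : nat.
Implicit Types (S : profile n) (u v : 'I_n).

Lemma dist_le_cost_max S u v : dist S u v <= cost_max S u.
Proof. by apply: leq_trans (leq_addr _ _); apply: leq_bigmax. Qed.

Lemma cost_max_connected S u : connectedU S -> cost_max S u = \max_v dist S u v.
Proof.
move=> conn; rewrite /cost_max; suff -> : ncomp S = 1 by rewrite subnn mul0n addn0.
rewrite /ncomp -(cards1 [set: 'I_n]); congr #|pred_of_set _|.
apply/setP=> A; rewrite inE; apply/imsetP/eqP => [[v _ ->]|->].
  by apply/setP=> w; rewrite !inE conn.
by exists u => //; apply/setP=> w; rewrite !inE conn.
Qed.

Lemma cost_max_le_walks S u B :
  (forall v, exists2 k, k <= B & walk S k u v) -> cost_max S u <= B.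
Proof.
move=> short; have conn : connectedU S.
  move=> a b; have [ka _ wa] := short a; have [kb _ wb] := short b.
  by apply: connect_trans (walk_connect wb); rewrite adj_connect_sym; apply: walk_connect wa.
rewrite cost_max_connected //; apply/bigmax_leqP => v _; have [k kB wk] := short v.
exact: leq_trans (dist_le_walk wk) kB.
Qed.

Lemma ncomp_gt0 S u : 0 < ncomp S.
Proof. by apply/card_gt0P; exists [set v | connect (adj S) u v]; apply/imsetP; exists u. Qed.

Lemma cost_max_le_ncomp S u : cost_max S u <= ncomp S * n ^ 2.
Proof.
have le_max : \max_v dist S u v <= n ^ 2 by apply/bigmax_leqP => v _; apply: dist_le_sqr.
move: (ncomp_gt0 S u); rewrite /cost_max; case: (ncomp S) => // c _.
by rewrite subn1 /= mulSn leq_add2r.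
Qed.

Lemma cost_max_disconnected S u v :
  ~~ connect (adj S) u v -> ncomp S * n ^ 2 <= cost_max S u.
Proof.
move=> nuv; have := leq_bigmax (F := dist S u) v.
rewrite dist_disconnected // /cost_max; case: (ncomp S) => // c.
by rewrite subn1 /= mulSn leq_add2r.
Qed.

Lemma ncomp_merge S S' u v :
  (forall x y, adj S x y -> connect (adj S') x y) ->
  ~~ connect (adj S) u v -> connect (adj S') u v -> ncomp S' < ncomp S.
Proof.
move=> coarse nuv uv.
pose comp S0 x := [set y | connect (adj S0) x y].
have coarse_conn x y : connect (adj S) x y -> connect (adj S') x y.
  case/connectP=> p + ->; elim: p x => [|z p IH] x /=; first by rewrite connect0.
  by case/andP=> /coarse xz /IH; apply: connect_trans.
pose merge (A : {set 'I_n}) := \bigcup_(x in A) comp S' x.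
have mergeE x : merge (comp S x) = comp S' x.
  apply/setP => y; apply/bigcupP/idP => [[z]|xy].
    by rewrite !inE => /coarse_conn xz zy; apply: connect_trans xz zy.
  by exists x; rewrite // inE connect0.
have -> : ncomp S' = #|merge @: [set comp S x | x : 'I_n]|.
  by rewrite -imset_comp; congr #|pred_of_set _|; apply: eq_imset => x /=; rewrite mergeE.
rewrite ltn_neqAle leq_imset_card andbT; apply/negP => /imset_injP merge_inj.
have memc x : comp S x \in [set comp S y | y : 'I_n] by apply/imsetP; exists x.
have uv' : connect (adj S') v u by rewrite adj_connect_sym.
have same : comp S u = comp S v.
  apply: merge_inj; rewrite ?memc // !mergeE; apply/setP => y; rewrite !inE.
  by apply/idP/idP; [exact: connect_trans uv' | exact: connect_trans uv].
by move/setP: same => /(_ v); rewrite !inE connect0 (negbTE nuv).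
Qed.

End Costs.

Section FunctionalGraphs.
Variable n : nat.
Implicit Types (u v w : 'I_n) (g : 'I_n -> 'I_n).

Definition fun_profile g : profile n := fun u => [set g u].

Definition redirect g i w := fun u => if u == i then w else g u.

Lemma adj_fun_profile g u v : adj (fun_profile g) u v = (v == g u) || (u == g v).
Proof. by rewrite /adj !inE. Qed.

Lemma adj_fun_profileE (S : profile n) g :
  (forall u, S u = [set g u]) -> adj S =2 adj (fun_profile g).
Proof. by move=> Sg u v; rewrite /adj !Sg. Qed.

Lemma adj_deviate_fun (S : profile n) g i w : (forall u, S u = [set g u]) ->
  adj (deviate S i [set w]) =2 adj (fun_profile (redirect g i w)).
Proof.
move=> Sg u v; rewrite /adj /deviate /fun_profile /redirect.
by case: (u == i); case: (v == i); rewrite ?Sg.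
Qed.

Lemma walk_iter_agree g g' j u :
  (forall i, i < j -> g' (iter i g u) = g (iter i g u)) ->
  walk (fun_profile g') j u (iter j g u).
Proof.
elim: j => [|j IH] agree; first exact: eqxx.
rewrite iterS -addn1; apply: walk_cat (IH _) _ => [i ij|]; first by apply: agree; apply: ltnW.
by apply: walk1; rewrite adj_fun_profile -(agree j) ?eqxx.
Qed.

Lemma walk_iter g j u : walk (fun_profile g) j u (iter j g u).
Proof. exact: walk_iter_agree. Qed.

Definition arc_lipschitz g (phi : 'I_n -> nat) :=
  forall u, phi u <= phi (g u) + 1 /\ phi (g u) <= phi u + 1.

Lemma arc_lipschitz_walk g phi k u v :
  arc_lipschitz g phi -> walk (fun_profile g) k u v -> phi v <= phi u + k.
Proof.
move=> lip; elim: k u => [|k IH] u /=; first by move/eqP->; rewrite addn0.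
case/existsP=> z /andP[+ /IH]; rewrite adj_fun_profile => /orP[] /eqP e.
  by have := (lip u).2; rewrite -e; lia.
by have := (lip z).1; rewrite -e; lia.
Qed.

Lemma iter_n_periodic g u : exists m, iter m.+1 g (iter n g u) = iter n g u.
Proof.
have le_order : order g u <= n.
  by apply: leq_trans (max_card _) _; rewrite card_ord.
have /trajectP [i lt_i_order Ei] := looping_order g u.
exists (order g u - i).-1; rewrite prednK ?subn_gt0 // -iterD.
have -> : order g u - i + n = (n - i) + order g u by lia.
by rewrite iterD Ei -iterD subnK // ltnW // (leq_trans lt_i_order).
Qed.

(* The arc [u -> g u] is replaced by the rest of the orbit of [u]. *)
Lemma connect_redirect_periodic g u w m :
  iter m.+1 g u = u -> forall x, connect (adj (fun_profile (redirect g u w))) x (g x).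
Proof.
move=> periodic x; have exm : exists m, iter m.+1 g u == u by exists m; rewrite periodic.
case: (eqVneq x u) => [->|xu]; last first.
  by apply: connect1; rewrite adj_fun_profile /redirect (negbTE xu) eqxx.
case: (ex_minnP exm) => m0 /eqP period minimal.
rewrite adj_connect_sym; apply: (@walk_connect _ _ m0).
rewrite -[X in walk _ _ _ X]period iterSr; apply: walk_iter_agree => i lt_i_m0.
rewrite /redirect -iterSr; case: eqP => // /eqP back.
by have := minimal i back; rewrite leqNgt lt_i_m0.
Qed.

Definition fun_equilibrium g := forall i w, w != i ->
  cost_max (fun_profile g) i <= cost_max (fun_profile (redirect g i w)) i.

Lemma fun_equilibrium_connected g :
  0 < n -> fun_equilibrium g -> connectedU (fun_profile g).
Proof.
move=> n0 eqg a b; apply/idPn => nab.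
set u := iter n g a; have [m periodic] := iter_n_periodic g a.
have au : connect (adj (fun_profile g)) a u by apply: walk_connect (walk_iter _ _ _).
have nub : ~~ connect (adj (fun_profile g)) u b.
  by apply: contra nab; apply: connect_trans au.
have bu : b != u by apply: contraNneq nub => ->; exact: connect0.
set S' := fun_profile (redirect g u b).
have coarse x y : adj (fun_profile g) x y -> connect (adj S') x y.
  rewrite adj_fun_profile => /orP[] /eqP->; first exact: connect_redirect_periodic periodic x.
  by rewrite adj_connect_sym; apply: connect_redirect_periodic periodic y.
have ub : connect (adj S') u b by apply: connect1; rewrite adj_fun_profile /redirect !eqxx.
have fewer := ncomp_merge coarse nub ub.
have := eqg u b bu; have := cost_max_disconnected nub; have := cost_max_le_ncomp S' u.
have : 0 < n ^ 2 by rewrite expn_gt0 n0.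
by move: fewer; rewrite -/S'; nia.
Qed.

End FunctionalGraphs.

Section UniqueCycle.
Variables (n : nat) (f : 'I_n -> 'I_n).
Hypothesis f_neq : forall u, f u != u.
Hypothesis f_conn : connectedU (fun_profile f).
Variable z0 : 'I_n.
Implicit Types (u v w : 'I_n).

(* [iter n f z0] lies on a cycle of [f]; by connectivity it is the only one. *)
Definition cyc := orbit f (iter n f z0).
Definition cyc_len := order f (iter n f z0).

Lemma fcycle_cyc : fcycle f cyc.
Proof. by apply/(orbitPcycle 0 3); apply: iter_n_periodic. Qed.

Lemma cyc_uniq : uniq cyc.
Proof. exact: orbit_uniq. Qed.

Lemma mem_cyc0 : iter n f z0 \in cyc.
Proof. exact: in_orbit. Qed.

Lemma mem_cyc_f v : v \in cyc -> f v \in cyc.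
Proof. exact: mem_orbit. Qed.

Lemma mem_cyc_iter j v : v \in cyc -> iter j f v \in cyc.
Proof. by elim: j => // j IH vC; rewrite iterS mem_cyc_f ?IH. Qed.

Lemma order_cyc v : v \in cyc -> order f v = cyc_len.
Proof. by move=> vC; rewrite (order_cycle fcycle_cyc cyc_uniq vC) size_orbit. Qed.

Lemma iter_cyc_len v : v \in cyc -> iter cyc_len f v = v.
Proof. exact: (iter_order_cycle fcycle_cyc mem_cyc0). Qed.

Lemma fconnect_cyc v b : v \in cyc -> fconnect f v b = (b \in cyc).
Proof. by move=> vC; rewrite (fconnect_cycle fcycle_cyc vC). Qed.

Lemma cyc_f_inj : {in cyc &, injective f}.
Proof. by apply/(orbitPcycle 5 3); apply: iter_n_periodic. Qed.

Lemma cyc_len_gt1 : 1 < cyc_len.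
Proof.
rewrite ltn_neqAle order_gt0 andbT; apply/eqP => len1.
by have /eqP := iter_cyc_len mem_cyc0; rewrite -len1 (negbTE (f_neq _)).
Qed.

(* [u |-> iter n f u \in cyc] is invariant along arcs. *)
Lemma mem_cyc_iter_n u : iter n f u \in cyc.
Proof.
have step v : (iter n f (f v) \in cyc) = (iter n f v \in cyc).
  rewrite -iterSr iterS; apply/idP/idP => [fC|/mem_cyc_f //].
  by have [m <-] := iter_n_periodic f v; rewrite iterSr; apply: mem_cyc_iter.
have [j] := connect_walk (f_conn (iter n f z0) u).
elim: j (iter n f z0) (mem_cyc_iter n mem_cyc0) => [|j IH] v vC /=; first by move/eqP <-.
case/existsP=> z /andP[]; rewrite adj_fun_profile => /orP[] /eqP e; apply: IH.
  by rewrite e step.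
by rewrite -step -e.
Qed.

Definition cyc_pos v b := findex f v b.

Lemma cyc_pos_self v : cyc_pos v v = 0.
Proof. exact: findex0. Qed.

Lemma iter_cyc_pos v b : v \in cyc -> b \in cyc -> iter (cyc_pos v b) f v = b.
Proof. by move=> vC bC; apply: iter_findex; rewrite fconnect_cyc. Qed.

Lemma cyc_pos_lt v b : v \in cyc -> b \in cyc -> cyc_pos v b < cyc_len.
Proof. by move=> vC bC; rewrite -(order_cyc vC); apply: findex_max; rewrite fconnect_cyc. Qed.

Lemma cyc_pos_iter v j : v \in cyc -> j < cyc_len -> cyc_pos v (iter j f v) = j.
Proof. by move=> vC jk; apply: findex_iter; rewrite order_cyc. Qed.

Lemma cyc_pos_f v b : v \in cyc -> b \in cyc ->
  cyc_pos v (f b) = if (cyc_pos v b).+1 == cyc_len then 0 else (cyc_pos v b).+1.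
Proof.
move=> vC bC; rewrite -{1}(iter_cyc_pos vC bC) -iterS; case: eqP => [->|ne].
  by rewrite iter_cyc_len // cyc_pos_self.
by rewrite cyc_pos_iter // ltn_neqAle cyc_pos_lt // andbT; apply/eqP.
Qed.

Definition depth x := ex_minn (ex_intro (fun j => iter j f x \in cyc) n (mem_cyc_iter_n x)).
Definition tree_root x := iter (depth x) f x.

Lemma mem_cyc_root x : tree_root x \in cyc.
Proof. by rewrite /tree_root /depth; case: ex_minnP. Qed.

Lemma depth_min x j : iter j f x \in cyc -> depth x <= j.
Proof. by rewrite /depth; case: ex_minnP => m _ min /min. Qed.

Lemma depth_eq0 x : (depth x == 0) = (x \in cyc).
Proof.
apply/eqP/idP => [d0|xC]; first by have := mem_cyc_root x; rewrite /tree_root d0.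
by apply/eqP; rewrite -leqn0; apply: (@depth_min x 0).
Qed.

Lemma depth_cyc x : x \in cyc -> depth x = 0.
Proof. by rewrite -depth_eq0 => /eqP. Qed.

Lemma notin_cyc_iter x j : j < depth x -> iter j f x \notin cyc.
Proof. by move=> lt_j; apply/negP => /depth_min; rewrite leqNgt lt_j. Qed.

Lemma depth_f x : x \notin cyc -> depth x = (depth (f x)).+1.
Proof.
move=> xC; have d0 : 0 < depth x by rewrite lt0n depth_eq0.
apply/eqP; rewrite eqn_leq; apply/andP; split.
  by apply: depth_min; rewrite iterSr mem_cyc_root.
by rewrite -(prednK d0) ltnS; apply: depth_min; rewrite -iterSr prednK // mem_cyc_root.
Qed.

Lemma tree_root_f x : x \notin cyc -> tree_root (f x) = tree_root x.
Proof. by move=> xC; rewrite /tree_root (depth_f xC) iterSr. Qed.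

Lemma tree_root_cyc x : x \in cyc -> tree_root x = x.
Proof. by rewrite -depth_eq0 /tree_root => /eqP->. Qed.

Lemma depth_iter x j : j <= depth x -> depth (iter j f x) = depth x - j.
Proof.
elim: j => [|j IH] le_j; first by rewrite subn0.
have := depth_f (notin_cyc_iter le_j); rewrite -iterS IH ?(ltnW le_j) //; lia.
Qed.

Lemma depth_child x z : x \notin cyc -> f z = x -> depth z = (depth x).+1.
Proof.
move=> xC fz; have zC : z \notin cyc by apply: contra xC => /mem_cyc_f; rewrite fz.
by rewrite depth_f // fz.
Qed.

Definition cyc_dist c b := minn (cyc_pos c b) (cyc_len - cyc_pos c b).

(* The length of the walk from [c] along the cycle to the root of [v] and up its tree. *)
Definition route c v := cyc_dist c (tree_root v) + depth v.

Lemma route_lipschitz c : c \in cyc -> arc_lipschitz f (route c).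
Proof.
move=> cC a; rewrite /route; case: (boolP (a \in cyc)) => aC; last first.
  by rewrite tree_root_f // (depth_f aC); lia.
have faC := mem_cyc_f aC; have := cyc_pos_lt cC aC.
rewrite !tree_root_cyc // !depth_cyc // /cyc_dist cyc_pos_f //.
by case: eqP; rewrite ?subn0; lia.
Qed.

Lemma route_self c : c \in cyc -> route c c = 0.
Proof. by move=> cC; rewrite /route tree_root_cyc // /cyc_dist cyc_pos_self min0n depth_cyc. Qed.

Lemma route_f c : c \in cyc -> route c (f c) = 1.
Proof.
move=> cC; have fcC := mem_cyc_f cC; have := cyc_len_gt1.
rewrite /route tree_root_cyc // depth_cyc //.
rewrite /cyc_dist cyc_pos_f // cyc_pos_self; case: eqP; lia.
Qed.

Lemma walk_route g c v : c \in cyc ->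
  (forall j a, (a \in cyc) || (a == v) -> walk (fun_profile g) j a (iter j f a)) ->
  walk (fun_profile g) (route c v) c v.
Proof.
move=> cC fwalk; rewrite /route; set r := tree_root v; have rC : r \in cyc := mem_cyc_root v.
have to_root : walk (fun_profile g) (cyc_dist c r) c r.
  rewrite /cyc_dist; move: (cyc_pos c r) (iter_cyc_pos cC rC) (cyc_pos_lt cC rC) => p Ep lt_p.
  rewrite /minn; case: ifP => _; first by rewrite -Ep; apply: fwalk; rewrite cC.
  have Eq : iter (cyc_len - p) f r = c by rewrite -Ep -iterD subnK ?iter_cyc_len // ltnW.
  by apply: walk_sym; rewrite -Eq; apply: fwalk; rewrite rC.
by apply: walk_cat to_root (walk_sym (fwalk _ _ _)); rewrite eqxx orbT.
Qed.

Definition cyc_arcs := [set (v, f v) | v in cyc].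

Lemma cycle_vertices_cyc_arcs : cycle_vertices cyc_arcs = [set v in cyc].
Proof.
apply/setP => v; rewrite !inE; apply/existsP/idP.
  by case=> a /andP[/imsetP[x xC ->]] /= /orP[] /eqP <- //; apply: mem_cyc_f.
by move=> vC; exists (v, f v); rewrite eqxx andbT; apply/imsetP; exists v.
Qed.

Lemma card_cycle_vertices_cyc_arcs : #|cycle_vertices cyc_arcs| = cyc_len.
Proof. by rewrite cycle_vertices_cyc_arcs cardsE (card_uniqP cyc_uniq) size_orbit. Qed.

Definition cyc_pred v := iter cyc_len.-1 f v.

Lemma f_cyc_pred v : v \in cyc -> f (cyc_pred v) = v.
Proof.
by move=> vC; rewrite /cyc_pred -iterS prednK ?iter_cyc_len // ltnW // cyc_len_gt1.
Qed.

Lemma mem_cyc_pred v : v \in cyc -> cyc_pred v \in cyc.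
Proof. exact: mem_cyc_iter. Qed.

Lemma edge_deg_cyc_arcs v : v \in cyc -> edge_deg cyc_arcs v = 2.
Proof.
move=> vC; rewrite /edge_deg.
have -> : [set a in cyc_arcs | a.1 == v] = [set (v, f v)].
  apply/setP => a; rewrite !inE; apply/andP/eqP => [[/imsetP[x _ ->] /= /eqP-> //]|->].
  by rewrite eqxx; split=> //; apply/imsetP; exists v.
have -> : [set a in cyc_arcs | a.2 == v] = [set (cyc_pred v, v)].
  apply/setP => a; rewrite !inE; apply/andP/eqP => [[/imsetP[x xC ->] /= /eqP fx]|->].
    by rewrite -fx; congr pair; apply: cyc_f_inj; rewrite ?f_cyc_pred ?mem_cyc_pred ?mem_cyc_f.
  by rewrite eqxx; split=> //; apply/imsetP; exists (cyc_pred v); rewrite ?mem_cyc_pred ?f_cyc_pred.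
by rewrite !cards1.
Qed.

Lemma is_cycle_cyc_arcs : is_cycle (fun_profile f) cyc_arcs.
Proof.
split.
- by move=> a /imsetP[x _ ->]; rewrite inE.
- apply/set0Pn; exists (iter n f z0, f (iter n f z0)).
  by apply/imsetP; exists (iter n f z0); rewrite ?mem_cyc0.
- by move=> v; rewrite cycle_vertices_cyc_arcs inE; apply: edge_deg_cyc_arcs.
- move=> u v; rewrite cycle_vertices_cyc_arcs !inE => uC vC.
  rewrite -(iter_cyc_pos uC vC); elim: (cyc_pos u v) => [|j IH]; first exact: connect0.
  apply: connect_trans IH (connect1 _); rewrite iterS; apply/orP; left.
  by apply/imsetP; exists (iter j f u); rewrite ?mem_cyc_iter.
Qed.

Section CycleUniqueness.
Variable E : {set 'I_n * 'I_n}.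
Hypothesis E_cycle : is_cycle (fun_profile f) E.
Local Notation V := (cycle_vertices E).

Lemma cycle_arcE a : a \in E -> a = (a.1, f a.1).
Proof.
by case: E_cycle => arcs _ _ _; case: a => a1 a2 /arcs; rewrite /fun_profile /= inE => /eqP->.
Qed.

Lemma cycle_vertices_tail a : a \in E -> a.1 \in V.
Proof. by move=> aE; rewrite inE; apply/existsP; exists a; rewrite aE eqxx. Qed.

Lemma cycle_vertices_head a : a \in E -> a.2 \in V.
Proof. by move=> aE; rewrite inE; apply/existsP; exists a; rewrite aE eqxx orbT. Qed.

(* Out-degrees are at most one, so degree two forces an incoming arc at every vertex. *)
Lemma cycle_arc_to v : v \in V -> exists2 a, a \in E & a.2 = v.
Proof.
move=> vV; case: E_cycle => _ _ /(_ v vV) + _; rewrite /edge_deg.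
have out1 : #|[set a in E | a.1 == v]| <= 1.
  rewrite -(cards1 (v, f v)); apply/subset_leq_card/subsetP => a.
  by rewrite !inE => /andP[aE /eqP av]; rewrite (cycle_arcE aE) av.
case: (set_0Vmem [set a in E | a.2 == v]) => [->|[a]]; first by rewrite cards0; lia.
by rewrite inE => /andP[aE /eqP av] _; exists a.
Qed.

(* Following incoming arcs backwards [n] times shows that every vertex of [E]
   is of the form [iter n f u]. *)
Lemma cycle_vertices_sub_cyc v : v \in V -> v \in cyc.
Proof.
move=> vV; have back j : exists2 u, u \in V & iter j f u = v.
  elim: j => [|j [u uV <-]]; first by exists v.
  have [a aE au] := cycle_arc_to uV; exists a.1; first exact: cycle_vertices_tail.
  by rewrite iterSr -au {2}(cycle_arcE aE).
by have [u _ <-] := back n; apply: mem_cyc_iter_n.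
Qed.

Lemma cycle_arc_from v : v \in V -> (v, f v) \in E.
Proof.
move=> vV; case: E_cycle => _ _ /(_ v vV) + _; rewrite /edge_deg.
have in1 : #|[set a in E | a.2 == v]| <= 1.
  rewrite -(cards1 (cyc_pred v, v)); apply/subset_leq_card/subsetP => a.
  rewrite !inE => /andP[aE /eqP av]; have ea := cycle_arcE aE.
  have a1C : a.1 \in cyc := cycle_vertices_sub_cyc (cycle_vertices_tail aE).
  have fa1 : f a.1 = v by rewrite -av ea.
  apply/eqP; rewrite ea -fa1; congr pair.
  by apply: cyc_f_inj; rewrite ?f_cyc_pred ?mem_cyc_pred ?mem_cyc_f.
move=> deg2; have /card_gt0P [a] : 0 < #|[set a in E | a.1 == v]| by lia.
by rewrite inE => /andP[aE /eqP <-]; rewrite -cycle_arcE.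
Qed.

Lemma cycle_verticesE v : (v \in V) = (v \in cyc).
Proof.
apply/idP/idP => [|vC]; first exact: cycle_vertices_sub_cyc.
case: E_cycle => _ /set0Pn [a aE] _ _; have aV := cycle_vertices_tail aE.
rewrite -(iter_cyc_pos (cycle_vertices_sub_cyc aV) vC).
elim: (cyc_pos a.1 v) => // j IH; rewrite iterS.
exact: cycle_vertices_head (cycle_arc_from IH).
Qed.

Lemma cycle_unique : E = cyc_arcs.
Proof.
apply/setP => a; apply/idP/idP => [aE|/imsetP[x xC ->]].
  rewrite (cycle_arcE aE); apply/imsetP; exists a.1 => //.
  by rewrite -cycle_verticesE cycle_vertices_tail.
by apply: cycle_arc_from; rewrite cycle_verticesE.
Qed.

End CycleUniqueness.

Section Equilibrium.
Hypothesis n_gt1 : 1 < n.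
Hypothesis f_eq : fun_equilibrium f.

Lemma arc_lipschitz_cost phi u v :
  arc_lipschitz f phi -> phi v <= phi u + cost_max (fun_profile f) u.
Proof.
move=> lip; have [j wj] := connect_walk (f_conn u v).
apply: leq_trans (arc_lipschitz_walk lip (walk_dist n_gt1 wj)) _.
by rewrite leq_add2l dist_le_cost_max.
Qed.

Lemma exists_deepest : exists x, forall y, depth y <= depth x.
Proof. by case: (@arg_maxnP _ z0 xpredT depth isT) => x _ max; exists x => y; apply: max. Qed.

Section DeepLeaf.
Variable x : 'I_n.
Hypothesis x_deepest : forall y, depth y <= depth x.
Hypothesis depth_x_gt2 : 2 < depth x.

Local Notation x1 := (iter (depth x).-1 f x).
Local Notation c := (tree_root x).

Lemma deep_leaf_notin_cyc : x \notin cyc.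
Proof. by rewrite -depth_eq0 -lt0n; lia. Qed.

Lemma deep_leaf_no_pred z : f z != x.
Proof.
apply/eqP => fz; have := depth_child deep_leaf_notin_cyc fz.
by have := x_deepest z; lia.
Qed.

Lemma depth_x1 : depth x1 = 1.
Proof. by rewrite depth_iter ?leq_pred //; lia. Qed.

Lemma x1_notin_cyc : x1 \notin cyc.
Proof. by rewrite -depth_eq0 depth_x1. Qed.

Lemma f_x1 : f x1 = c.
Proof. by rewrite -iterS prednK //; lia. Qed.

Lemma x1_neq_x : x1 != x.
Proof. by apply/eqP => e; have := depth_x1; rewrite e; lia. Qed.

(* The vertices whose path to the cycle passes through [x1]. *)
Definition branch y := (0 < depth y) && (iter (depth y).-1 f y == x1).

Lemma branchP j y : iter j f y = x1 -> branch y.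
Proof.
move=> e; case: (leqP j (depth y)) => le_j.
  have := depth_iter le_j; rewrite e depth_x1 => dy.
  by rewrite /branch -e; apply/andP; split; [lia | have -> : (depth y).-1 = j by lia].
have : iter j f y \in cyc.
  by rewrite -(subnK (ltnW le_j)) iterD; apply: mem_cyc_iter; apply: mem_cyc_root.
by rewrite e (negbTE x1_notin_cyc).
Qed.

Lemma branch_x : branch x.
Proof. by apply/andP; split; [lia | apply/eqP]. Qed.

Lemma branch_notin_cyc y : branch y -> y \notin cyc.
Proof. by case/andP; rewrite -depth_eq0 -lt0n. Qed.

Definition branch_pot y := if branch y then depth x - depth y else depth x + route c y.

Lemma branch_pot_lipschitz : arc_lipschitz f branch_pot.
Proof.
have cC : c \in cyc := mem_cyc_root x.
move=> a; rewrite /branch_pot; case: (boolP (branch a)) => Ba; case: (boolP (branch (f a))) => Bfa.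
- by have := depth_f (branch_notin_cyc Ba); have := x_deepest a; lia.
- case/andP: Ba Bfa; case: (depth a) => // [[|j]] _ /= /eqP e.
    by rewrite e f_x1 route_self //; lia.
  by rewrite (branchP (j := j)) // -iterSr.
- by case/andP: Bfa Ba => _ /eqP e; rewrite (branchP (j := (depth (f a)).-1.+1)) // iterSr.
- by have := route_lipschitz cC a; lia.
Qed.

Lemma cost_deep_leaf_ge y : ~~ branch y -> depth x + route c y <= cost_max (fun_profile f) x.
Proof.
move=> By; have := arc_lipschitz_cost x y branch_pot_lipschitz.
by rewrite /branch_pot branch_x (negbTE By) subnn.
Qed.

Lemma walk_redirect_deep_leaf w j a : a != x ->
  walk (fun_profile (redirect f x w)) j a (iter j f a).
Proof.
move=> ax; apply: walk_iter_agree => -[|i] _ /=; rewrite /redirect.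
  by rewrite (negbTE ax).
by rewrite (negbTE (deep_leaf_no_pred _)).
Qed.

(* Redirecting [x] to [x1] keeps the branch within [depth x] and brings the rest
   two steps from [c]. *)
Lemma redirect_deep_leaf_profitable :
  cost_max (fun_profile (redirect f x x1)) x < cost_max (fun_profile f) x.
Proof.
have cC : c \in cyc := mem_cyc_root x.
have fcC := mem_cyc_f cC.
have ge1 : depth x + 1 <= cost_max (fun_profile f) x.
  rewrite -(route_f cC); apply: cost_deep_leaf_ge; apply: contraL fcC; exact: branch_notin_cyc.
suff : cost_max (fun_profile (redirect f x x1)) x <= (cost_max (fun_profile f) x).-1 by lia.
apply: cost_max_le_walks => y; case: (eqVneq y x) => [->|yx]; first by exists 0 => //; apply: eqxx.
have to_x1 : walk (fun_profile (redirect f x x1)) 1 x x1.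
  by apply: walk1; rewrite adj_fun_profile /redirect !eqxx.
case: (boolP (branch y)) => By.
  exists (1 + (depth y).-1); first by have := x_deepest y; case/andP: By; lia.
  apply: walk_cat to_x1 (walk_sym _); case/andP: By => _ /eqP {2}<-.
  exact: walk_redirect_deep_leaf.
exists (2 + route c y); first by have := cost_deep_leaf_ge By; lia.
have to_c : walk (fun_profile (redirect f x x1)) 2 x c.
  by rewrite -f_x1; apply: (walk_cat to_x1 (walk_redirect_deep_leaf _ 1 x1_neq_x)).
apply: walk_cat to_c (walk_route cC _) => j a /orP[aC|/eqP->].
  by apply: walk_redirect_deep_leaf; apply: contraTneq aC => ->; exact: deep_leaf_notin_cyc.
exact: walk_redirect_deep_leaf.
Qed.

End DeepLeaf.

Lemma depth_le2 v : depth v <= 2.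
Proof.
have [x deepest] := exists_deepest; apply: leq_trans (deepest v) _; rewrite leqNgt.
apply/negP => gt2; have := f_eq (x1_neq_x gt2).
by rewrite leqNgt redirect_deep_leaf_profitable.
Qed.

Section LongCycle.
Variable y : 'I_n.
Hypothesis y_deepest : forall z, depth z <= depth y.
Hypothesis cyc_len_gt7 : 7 < cyc_len.

Local Notation p := (cyc_len %/ 2).
Local Notation c := (iter p f (tree_root y)).
Local Notation w := (iter p.-1 f c).

Lemma mem_cyc_opposite : c \in cyc.
Proof. exact/mem_cyc_iter/mem_cyc_root. Qed.

Lemma route_opposite : route c y = p + depth y.
Proof.
have back : iter (cyc_len - p) f c = tree_root y.
  by rewrite -iterD subnK ?iter_cyc_len ?mem_cyc_root //; lia.
have pos_root : cyc_pos c (tree_root y) = cyc_len - p.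
  by rewrite -[X in cyc_pos _ X]back cyc_pos_iter ?mem_cyc_opposite //; lia.
by rewrite /route /cyc_dist pos_root; lia.
Qed.

Lemma redirect_opposite_neq : w != c.
Proof.
apply/eqP => e; have := cyc_pos_iter mem_cyc_opposite (_ : p.-1 < cyc_len).
by rewrite e cyc_pos_self; lia.
Qed.

Lemma walk_cyc_redirect s t : 0 < s -> s <= t -> t <= cyc_len ->
  walk (fun_profile (redirect f c w)) (t - s) (iter s f c) (iter t f c).
Proof.
move=> s_gt0 le_st le_t; rewrite -{2}(subnK le_st) iterD; apply: walk_iter_agree => i lt_i.
rewrite /redirect -iterD; case: eqP => // back.
by have := cyc_pos_iter mem_cyc_opposite (_ : i + s < cyc_len); rewrite back cyc_pos_self; lia.
Qed.

(* After the redirection [c] reaches every cycle vertex within [p - 1] steps,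
   going either way round from [w] or backwards from [c]. *)
Lemma walk_redirect_opposite_cyc b : b \in cyc ->
  exists2 l, l <= p.-1 & walk (fun_profile (redirect f c w)) l c b.
Proof.
move=> bC; have to_w : walk (fun_profile (redirect f c w)) 1 c w.
  by apply: walk1; rewrite adj_fun_profile /redirect !eqxx.
rewrite -(iter_cyc_pos mem_cyc_opposite bC); have := cyc_pos_lt mem_cyc_opposite bC.
case: (cyc_pos c b) => [_|s lt_s]; first by exists 0 => //; apply: eqxx.
case: (ltnP s.+1 p.-1) => [lt_sp|le_ps].
  exists (1 + (p.-1 - s.+1)); first lia.
  by apply: walk_cat to_w (walk_sym (walk_cyc_redirect _ _ _)); lia.
case: (leqP s.+1 (2 * p - 3)) => [le_s|gt_s].
  exists (1 + (s.+1 - p.-1)); first lia.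
  by apply: walk_cat to_w (walk_cyc_redirect _ _ _); lia.
exists (cyc_len - s.+1); first lia.
apply: walk_sym; have := walk_cyc_redirect (s := s.+1) (t := cyc_len) isT (ltnW lt_s) (leqnn _).
by rewrite iter_cyc_len ?mem_cyc_opposite.
Qed.

Lemma redirect_opposite_profitable :
  cost_max (fun_profile (redirect f c w)) c < cost_max (fun_profile f) c.
Proof.
have lb := arc_lipschitz_cost c y (route_lipschitz mem_cyc_opposite).
rewrite route_opposite route_self ?mem_cyc_opposite // add0n in lb.
apply: leq_trans lb.
suff : cost_max (fun_profile (redirect f c w)) c <= p.-1 + depth y by lia.
apply: cost_max_le_walks => v; have [l le_l to_root] := walk_redirect_opposite_cyc (mem_cyc_root v).
exists (l + depth v); first by have := y_deepest v; lia.
apply: walk_cat to_root (walk_sym (walk_iter_agree _)) => i lt_i.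
rewrite /redirect; case: eqP => // e; have := notin_cyc_iter lt_i.
by rewrite e mem_cyc_opposite.
Qed.

End LongCycle.

Lemma cyc_len_le7 : cyc_len <= 7.
Proof.
have [y deepest] := exists_deepest; rewrite leqNgt; apply/negP => gt7.
by have := f_eq (redirect_opposite_neq y gt7); rewrite leqNgt redirect_opposite_profitable.
Qed.

End Equilibrium.
End UniqueCycle.

Lemma unit_budget_fun n (S : profile n) : valid_profile (fun _ => 1) S ->
  exists2 f : 'I_n -> 'I_n, forall u, f u != u & forall u, S u = [set f u].
Proof.
move=> valid; pose f u := odflt u [pick v in S u].
have Sf u : S u = [set f u].
  have [_ /eqP/cards1P [v Su]] := valid u.
  by rewrite /f Su; case: pickP => [w|/(_ v)]; rewrite inE ?eqxx // => /eqP->.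
by exists f => // u; have [] := valid u; rewrite Sf inE eq_sym.
Qed.

Lemma equilibrium_fun_equilibrium n (S : profile n) f :
  (forall u, S u = [set f u]) -> equilibrium_max (fun _ => 1) S -> fun_equilibrium f.
Proof.
move=> Sf [_ eqS] i w wi.
rewrite -(eq_cost_max (adj_fun_profileE Sf)) -(eq_cost_max (adj_deviate_fun _ _ Sf)).
by apply: eqS; rewrite ?inE ?cards1 // eq_sym.
Qed.

Lemma eq_is_cycle n (S S' : profile n) E : S =1 S' -> is_cycle S E -> is_cycle S' E.
Proof. by move=> eS [arcs ne deg conn]; split=> // a /arcs; rewrite eS. Qed.

Theorem mainTheorem7 (n : nat) (hn : 2 <= n) (S : 'I_n -> {set 'I_n}) :
  equilibrium_max (fun _ : 'I_n => 1) S ->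
  connectedU S /\
  exists E : {set 'I_n * 'I_n},
    [/\ is_cycle S E,
        (forall E' : {set 'I_n * 'I_n}, is_cycle S E' -> E' = E),
        #|cycle_vertices E| <= 7 &
        (forall v : 'I_n, exists2 c, c \in cycle_vertices E & dist S v c <= 2)].
Proof.
move=> eqS; have [f f_neq Sf] := unit_budget_fun eqS.1.
have f_eq := equilibrium_fun_equilibrium Sf eqS.
have f_conn := fun_equilibrium_connected (ltnW hn) f_eq.
have adjS := adj_fun_profileE Sf.
have fS : fun_profile f =1 S by move=> u; rewrite Sf.
have z0 : 'I_n := Ordinal (ltnW hn).
split=> [u v|]; first by rewrite (eq_connect adjS).
exists (cyc_arcs f z0); split.
- exact: eq_is_cycle fS (is_cycle_cyc_arcs f_neq z0).
- by move=> E /(eq_is_cycle (fsym fS)); apply: cycle_unique.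
- by rewrite card_cycle_vertices_cyc_arcs //; apply: cyc_len_le7.
- move=> v; exists (tree_root f_conn z0 v).
    by rewrite cycle_vertices_cyc_arcs inE mem_cyc_root.
  rewrite (eq_dist adjS); apply: leq_trans (dist_le_walk (walk_iter _ _ _)) _.
  exact: depth_le2.
Qed.
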